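(* Consider the regular partially labeled binary broadcasting tree $\text{Tree}_{k=2}(\theta,d,\delta)$ (see context), and let $\mu^{+}_{\ell_{T_{\leq t}(\rho)}}$ and $\mu^{-}_{\ell_{T_{\leq t}(\rho)}}$ be the distributions of the revealed labels $\ell_{T_{\leq t}(\rho)}$ conditionally on $\ell(\rho)=+$ and $\ell(\rho)=-$ respectively. Assume $\delta d>1$, $(1-\delta)\theta^2 d<1$, and $2\delta d\log\big(1+\frac{4\theta^2}{1-\theta^2}\big)<[1-(1-\delta)\theta^2 d]^2$. Then for any $t>0$, $$d_{\rm TV}^2\big(\mu^{+}_{\ell_{T_{\leq t}(\rho)}},\mu^{-}_{\ell_{T_{\leq t}(\rho)}}\big)\leq \frac{2\delta d\log\big(1+\frac{4\theta^2}{1-\theta^2}\big)}{1-(1-\delta)\theta^2 d},$$ and consequently $$\inf_\Phi\sup_{\ell(\rho)\in\{+,-\}}\mathbb{P}\big(\Phi(\ell_{T_{\leq t}(\rho)})\neq\ell(\rho)\big)\geq \frac12-C\Big\{\frac{\delta d\log\big(1+\frac{4\theta^2}{1-\theta^2}\big)}{1-(1-\delta)\theta^2 d}\Big\}^{1/2},$$ where the infimum is over all estimators $\Phi$ mapping the revealed labels of the depth-$t$ tree to $\{+,-\}$ and $C>0$ is a universal constant.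
   Context: $\text{Tree}_{k=2}(\theta,d,\delta)$ (regular version): a rooted tree in which every vertex has $d$ children, exactly $\delta d$ of which have revealed labels and $(1-\delta)d$ unlabeled. The root label $\ell(\rho)\in\{+,-\}$ is unrevealed; each child copies its parent's label with probability $\frac{1+\theta}{2}$ and takes the opposite label with probability $\frac{1-\theta}{2}$, independently, $0<\theta<1$. $\ell_{T_{\leq t}(\rho)}$ is the collection of revealed labels at depth $\leq t$. *)

From HB Require Import structures.
From mathcomp Require Import all_boot all_order all_algebra.
From mathcomp Require Import reals exp.
Set Implicit Arguments. Unset Strict Implicit. Unset Printing Implicit Defensive.
Import Order.TTheory GRing.Theory Num.Theory.
Local Open Scope ring_scope.

(* Vertices of the full d-ary tree truncated at depth t: a vertex at depth
   k <= t is the sequence of child indices (in 'I_d) leading from the root. *)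
Definition vtx (t d : nat) := {k : 'I_t.+1 & k.-tuple 'I_d}.

Definition vseq (t d : nat) (v : vtx t d) : seq 'I_d := tagged v.

Definition edge (t d : nat) (u v : vtx t d) : bool :=
  [exists i : 'I_d, rcons (vseq u) i == vseq v].

(* Among the d children of each vertex, those with index < m (m = delta*d)
   have revealed labels; the root is unrevealed. *)
Definition revealed (t d m : nat) (v : vtx t d) : bool :=
  if vseq v is x :: s then (last x s < m)%N else false.

Definition revV (t d m : nat) := {v : vtx t d | revealed m v}.

(* Observations: the revealed labels (true = +, false = -). *)
Definition obs (t d m : nat) := {ffun revV t d m -> bool}.

Definition kern (R : realType) (theta : R) (a b : bool) : R :=
  if a == b then (1 + theta) / 2 else (1 - theta) / 2.

Definition weight (R : realType) (t d : nat) (theta : R) (sigma : bool)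
    (l : {ffun vtx t d -> bool}) : R :=
  (\prod_(v : vtx t d | size (vseq v) == 0%N) (l v == sigma)%:R) *
  \prod_(u : vtx t d) \prod_(v : vtx t d | edge u v) kern theta (l u) (l v).

Definition mu (R : realType) (t d m : nat) (theta : R) (sigma : bool)
    (w : obs t d m) : R :=
  \sum_(l : {ffun vtx t d -> bool} | [forall r : revV t d m, l (val r) == w r])
     weight theta sigma l.

Definition dTV (R : realType) (t d m : nat) (theta : R) : R :=
  2^-1 * \sum_(w : obs t d m) `|mu theta true w - mu theta false w|.

Definition err (R : realType) (t d m : nat) (theta : R)
    (Phi : obs t d m -> bool) (sigma : bool) : R :=
  \sum_(w : obs t d m | Phi w != sigma) mu theta sigma w.

From HB Require Import structures.
From mathcomp Require Import all_boot all_order all_algebra.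
From mathcomp Require Import reals exp.
From mathcomp Require Import ring lra.
Set Implicit Arguments. Unset Strict Implicit. Unset Printing Implicit Defensive.
Import Order.TTheory GRing.Theory Num.Theory.
Local Open Scope ring_scope.

(* Let rho_t be the Bhattacharyya coefficient sum_w sqrt (mu+(w) mu-(w)) of
   the two laws of the revealed labels of the depth-t tree.  Given the root
   label, the d subtrees hanging from the root are independent, so rho_(t+1)
   is the product over the children of the coefficients of the pair (child
   label if revealed, observations in its subtree).  A revealed child sends
   its label through a binary symmetric channel and contributes at least
   1 - theta^2; an unrevealed one contracts the Hellinger gap 1 - rho_t by
   theta^2 and contributes at least 1 - theta^2 (1 - rho_t).  Weierstrass'
   product inequality gives
     1 - rho_(t+1) <= delta d theta^2 + (1 - delta) d theta^2 (1 - rho_t),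
   hence 1 - rho_t <= delta d theta^2 / (1 - (1 - delta) theta^2 d) for all t.
   Cauchy-Schwarz gives d_TV^2 <= 1 - rho_t^2 <= 2 (1 - rho_t), and
   theta^2 <= log (1 + 4 theta^2 / (1 - theta^2)).  Le Cam's two-point bound
   then gives the second claim with C = 1.  Neither t > 0 nor the hypothesis
   2 delta d log (...) < [...]^2 is needed. *)

Lemma big_option (R : Type) (idx : R) (op : Monoid.com_law idx) (T : finType)
    (F : option T -> R) :
  \big[op/idx]_(o : option T) F o = op (F None) (\big[op/idx]_(x : T) F (Some x)).
Proof.
have enumE : perm_eq (index_enum (option T)) (None :: map Some (enum T)).
  apply: uniq_perm; first exact: index_enum_uniq.
    rewrite /= map_inj_uniq ?enum_uniq ?andbT; last exact: Some_inj.
    by apply/mapP => -[].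
  by case=> [x|]; rewrite mem_index_enum //= in_cons /= mem_map ?mem_enum //; exact: Some_inj.
by rewrite (perm_big _ enumE) big_cons big_map -[in RHS]big_enum.
Qed.

Lemma big_option_cond (R : Type) (idx : R) (op : Monoid.com_law idx) (T : finType)
    (P : pred (option T)) (F : option T -> R) :
  \big[op/idx]_(o | P o) F o =
  op (if P None then F None else idx) (\big[op/idx]_(x | P (Some x)) F (Some x)).
Proof. by rewrite big_mkcond big_option [in RHS]big_mkcond. Qed.

Section BigSums.
Variable R : comPzSemiRingType.

Lemma natr_forall (I : finType) (P : pred I) :
  ([forall i, P i]%:R : R) = \prod_i (P i)%:R.
Proof.
have [/forallP allP|] := boolP [forall i, P i].
  by rewrite big1 // => i _; rewrite allP.
rewrite negb_forall => /existsP [i /negbTE Pi].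
by rewrite (bigD1 i) //= Pi mul0r.
Qed.

Lemma sum_ffun_cond_prod (I J : finType) (P : I -> pred J) (F : I -> J -> R) :
  \sum_(f : {ffun I -> J} | [forall i, P i (f i)]) \prod_i F i (f i)
  = \prod_i \sum_(x | P i x) F i x.
Proof.
rewrite bigA_distr_big_dep; apply: eq_bigl => f.
by apply/forallP/familyP => Pf i; have := Pf i.
Qed.

Lemma sum_pair_condl (A B : finType) (P : pred A) (F : A * B -> R) :
  \sum_(x : A * B | P x.1) F x = \sum_(a | P a) \sum_b F (a, b).
Proof.
rewrite (pair_big P xpredT (fun a b => F (a, b))) /=.
by apply: eq_big => [x|[a b] _] //=; rewrite andbT.
Qed.

End BigSums.

Section RealInequalities.
Variable R : rcfType.

Lemma unit_itv_bound (x : R) : 0 < x < 1 -> -1 <= x <= 1.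
Proof. by case/andP=> ? ?; apply/andP; split; lra. Qed.

Lemma sqr_unit_itv (x : R) : 0 < x < 1 -> 0 < x ^+ 2 < 1.
Proof. by case/andP=> ? ?; apply/andP; split; nra. Qed.

Lemma ler_sqrtr_sqr (x y : R) : 0 <= y -> y ^+ 2 <= x -> y <= Num.sqrt x.
Proof.
move=> y_ge0 yx; have x_ge0 : 0 <= x by apply: le_trans yx; exact: sqr_ge0.
by rewrite -(ger0_norm y_ge0) -sqrtr_sqr ler_sqrt.
Qed.

Lemma sqrtrM_le_avg (a b : R) : 0 <= a -> 0 <= b -> Num.sqrt (a * b) <= (a + b) / 2.
Proof.
move=> a_ge0 b_ge0; have avg_ge0 : 0 <= (a + b) / 2 by apply: divr_ge0; lra.
rewrite -(ger0_norm avg_ge0) -sqrtr_sqr ler_sqrt; last exact: sqr_ge0.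
have -> : ((a + b) / 2) ^+ 2 = a * b + ((a - b) / 2) ^+ 2 by field.
by rewrite lerDl sqr_ge0.
Qed.

Lemma sqrtr_prod (I : finType) (F : I -> R) :
  (forall i, 0 <= F i) -> Num.sqrt (\prod_i F i) = \prod_i Num.sqrt (F i).
Proof.
move=> F_ge0; pose K (a b : R) := 0 <= a /\ Num.sqrt a = b.
suff [] : K (\prod_i F i) (\prod_i Num.sqrt (F i)) by [].
apply: (big_rec2 K); first by split; [exact: ler01 | exact: sqrtr1].
by move=> i p _ _ [p_ge0 <-]; split; [exact: mulr_ge0 | rewrite sqrtrM].
Qed.

Lemma sum_sqrtrM_le1 (I : finType) (P : pred I) (p q : I -> R) :
  (forall i, 0 <= p i) -> (forall i, 0 <= q i) ->
  \sum_(i | P i) p i = 1 -> \sum_(i | P i) q i = 1 ->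
  \sum_(i | P i) Num.sqrt (p i * q i) <= 1.
Proof.
move=> p_ge0 q_ge0 sum_p sum_q.
apply: (le_trans (y := \sum_(i | P i) (p i + q i) / 2)).
  by apply: ler_sum => i _; apply: sqrtrM_le_avg.
by rewrite -mulr_suml big_split /= sum_p sum_q; lra.
Qed.

Lemma subr_sum_le_prod (I : finType) (x e : I -> R) :
  (forall i, 0 <= x i <= 1) -> (forall i, 1 - e i <= x i) -> (forall i, 0 <= e i) ->
  1 - \sum_i e i <= \prod_i x i.
Proof.
move=> x01 xe e_ge0.
pose K (p s : R) := [/\ 0 <= p, p <= 1, 0 <= s & 1 - s <= p].
suff [] : K (\prod_i x i) (\sum_i e i) by [].
apply: (big_rec2 K); first by split => //; lra.
move=> i p s _ [p_ge0 p_le1 s_ge0 sp]; have /andP [xi_ge0 xi_le1] := x01 i.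
have := xe i; have := e_ge0 i; move=> ei_ge0 xei.
split; [exact: mulr_ge0 | by rewrite -[1]mulr1; apply: ler_pM | exact: addr_ge0 |].
have [s_le1|s_gt1] := lerP 0 (1 - s); last by have := mulr_ge0 xi_ge0 p_ge0; lra.
have := ler_wpM2l xi_ge0 sp; have := ler_wpM2r s_le1 xei; nra.
Qed.

Lemma cauchy_schwarz_sum (I : finType) (a b : I -> R) :
  (\sum_i a i * b i) ^+ 2 <= (\sum_i a i ^+ 2) * (\sum_i b i ^+ 2).
Proof.
set A := \sum_i a i ^+ 2; set B := \sum_i b i ^+ 2; set C := \sum_i a i * b i.
have A_ge0 : 0 <= A by apply: sumr_ge0 => i _; exact: sqr_ge0.
have [A_gt0|A_le0] := ltrP 0 A.
  have : 0 <= \sum_i (A * b i - C * a i) ^+ 2 by apply: sumr_ge0 => i _; exact: sqr_ge0.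
  rewrite (eq_bigr (fun i => A ^+ 2 * b i ^+ 2 - (2 * A * C) * (a i * b i) + C ^+ 2 * a i ^+ 2));
    last by move=> i _; ring.
  rewrite big_split sumrB /= -!mulr_sumr -/A -/B -/C => sum_sq_ge0.
  have : 0 <= A * (A * B - C ^+ 2) by nra.
  by rewrite pmulr_rge0 // subr_ge0.
have A0 : A = 0 by apply/eqP; rewrite eq_le A_le0 A_ge0.
have a0 i : a i = 0.
  move/eqP: A0; rewrite psumr_eq0; last by move=> j _; exact: sqr_ge0.
  by move/allP => /(_ i (mem_index_enum i)) /=; rewrite sqrf_eq0 => /eqP.
by rewrite /C big1 ?A0 => [|i _]; rewrite ?a0 ?mul0r // expr0n.
Qed.

Lemma sum_ord_ltn_if d m (A B : R) : (m <= d)%N ->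
  \sum_(i < d) (if (i < m)%N then A else B) = m%:R * A + (d - m)%:R * B.
Proof.
move=> le_md.
have count_m : \sum_(i < d) ((i < m)%N%:R : R) = m%:R.
  rewrite (eq_bigr (fun i : 'I_d => if (i < m)%N then (1 : R) else 0)); last first.
    by move=> i _; case: (i < m)%N.
  rewrite -big_mkcond /= -(big_ord_widen d (fun _ => (1 : R)) le_md).
  by rewrite sumr_const card_ord -[RHS]mulr1n.
rewrite (eq_bigr (fun i : 'I_d => (i < m)%N%:R * (A - B) + B)); last first.
  by move=> i _; case: (i < m)%N; rewrite ?mul1r ?mul0r ?add0r //; ring.
by rewrite big_split /= -mulr_suml count_m sumr_const card_ord natrB // -mulr_natl; ring.
Qed.

(* The two mixtures are the weights of a child's subtree seen from root label
   + and -: the channel contracts the Hellinger gap [(P + Q) / 2 - sqrt (P Q)]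
   by at least theta ^ 2. *)
Lemma bsc_sqrtrM_ge (theta P Q : R) : 0 <= P -> 0 <= Q -> 0 <= theta <= 1 ->
  (P + Q) / 2 - theta ^+ 2 * ((P + Q) / 2 - Num.sqrt (P * Q)) <=
  Num.sqrt ((((1 + theta) / 2) * P + ((1 - theta) / 2) * Q) *
            (((1 - theta) / 2) * P + ((1 + theta) / 2) * Q)).
Proof.
move=> P_ge0 Q_ge0 /andP [theta_ge0 theta_le1].
set g := Num.sqrt (P * Q); set s := (P + Q) / 2.
have g_ge0 : 0 <= g by exact: sqrtr_ge0.
have g_sqr : g ^+ 2 = P * Q by rewrite sqr_sqrtr //; exact: mulr_ge0.
have g_le_s : g <= s by exact: sqrtrM_le_avg.
have theta2_le1 : theta ^+ 2 <= 1 by nra.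
have theta2_ge0 : 0 <= theta ^+ 2 by exact: sqr_ge0.
apply: ler_sqrtr_sqr; first by nra.
have -> : (((1 + theta) / 2) * P + ((1 - theta) / 2) * Q) *
          (((1 - theta) / 2) * P + ((1 + theta) / 2) * Q) =
          (1 - theta ^+ 2) * s ^+ 2 + theta ^+ 2 * g ^+ 2 by rewrite g_sqr /s; field.
have -> : (1 - theta ^+ 2) * s ^+ 2 + theta ^+ 2 * g ^+ 2 =
   (s - theta ^+ 2 * (s - g)) ^+ 2 + theta ^+ 2 * (1 - theta ^+ 2) * (s - g) ^+ 2 by ring.
by rewrite lerDl !mulr_ge0 ?sqr_ge0 // subr_ge0.
Qed.

(* Le Cam's two-point argument, from a bound [T ^+ 2 <= 2 * X] on the total
   variation distance [T]. *)
Lemma two_point_lower_bound (T X e1 e2 : R) :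
  0 <= T -> 0 <= X -> T ^+ 2 <= 2 * X -> 1 - T <= e1 + e2 ->
  1 / 2 - Num.sqrt X <= Num.max e1 e2.
Proof.
move=> T_ge0 X_ge0 TX err_ge.
have T_le : T <= 2 * Num.sqrt X.
  rewrite -[2]ger0_norm // -sqrtr_sqr -sqrtrM ?sqr_ge0 //.
  by apply: ler_sqrtr_sqr => //; nra.
have e1_le : e1 <= Num.max e1 e2 by rewrite le_max lexx.
have e2_le : e2 <= Num.max e1 e2 by rewrite le_max lexx orbT.
lra.
Qed.

End RealInequalities.

(** * The truncated d-ary tree *)

Definition vtx_root t d : vtx t d :=
  existT (fun k : 'I_t.+1 => k.-tuple 'I_d) ord0 [tuple].

Section Vertices.
Variables t d : nat.
Implicit Types v : vtx t d.

Lemma vseq_inj : injective (@vseq t d).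
Proof.
move=> [k1 s1] [k2 s2]; rewrite /vseq /= => eq_s.
have ek : k1 = k2 by apply: val_inj; rewrite /= -(size_tuple s1) -(size_tuple s2) eq_s.
by subst k2; congr existT; apply: val_inj.
Qed.

Lemma size_vseq v : (size (vseq v) <= t)%N.
Proof. by case: v => k s; rewrite /vseq /= size_tuple -ltnS. Qed.

Lemma size_vseq_eq0 v : (size (vseq v) == 0%N) = (v == vtx_root t d).
Proof.
apply/idP/eqP => [|->] //; rewrite size_eq0 => /eqP vs0.
by apply: vseq_inj; rewrite vs0.
Qed.

Lemma size_take_ltS (s : seq 'I_d) : (size (take t s) < t.+1)%N.
Proof. by rewrite size_take_min ltnS geq_minl. Qed.

Definition vtx_trunc (s : seq 'I_d) : vtx t d :=
  existT (fun k : 'I_t.+1 => k.-tuple 'I_d) (Ordinal (size_take_ltS s))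
    (in_tuple (take t s)).

Lemma vseq_trunc (s : seq 'I_d) : vseq (vtx_trunc s) = take t s.
Proof. by []. Qed.

Lemma vtx_truncK : cancel (@vseq t d) vtx_trunc.
Proof. by move=> v; apply: vseq_inj; rewrite vseq_trunc take_oversize // size_vseq. Qed.

End Vertices.

Section VertexCons.
Variables t d : nat.
Implicit Types v : vtx t d.

Definition vtx_cons (i : 'I_d) v : vtx t.+1 d :=
  existT (fun k : 'I_t.+2 => k.-tuple 'I_d) (@Ordinal t.+2 (tag v).+1 (ltn_ord (tag v)))
    (cons_tuple i (tagged v)).

Lemma vseq_cons i v : vseq (vtx_cons i v) = i :: vseq v.
Proof. by []. Qed.

Definition vtx_uncons (v : vtx t.+1 d) : option ('I_d * vtx t d) :=
  if vseq v is i :: s then Some (i, vtx_trunc t s) else None.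

Definition vtx_of_option (x : option ('I_d * vtx t d)) : vtx t.+1 d :=
  if x is Some (i, v) then vtx_cons i v else vtx_root t.+1 d.

Lemma vtx_unconsK : cancel vtx_uncons vtx_of_option.
Proof.
move=> v; apply: vseq_inj; rewrite /vtx_uncons.
case vsE: (vseq v) => [|i s] //=.
rewrite vseq_cons vseq_trunc take_oversize //; by have := size_vseq v; rewrite vsE.
Qed.

Lemma vtx_of_optionK : cancel vtx_of_option vtx_uncons.
Proof. by case=> [[i v]|] //=; rewrite /vtx_uncons vseq_cons vtx_truncK. Qed.

Lemma vtx_of_option_bij : bijective vtx_of_option.
Proof. exact: Bijective vtx_of_optionK vtx_unconsK. Qed.

Lemma vtx_uncons_cons i v : vtx_uncons (vtx_cons i v) = Some (i, v).
Proof. exact: (vtx_of_optionK (Some (i, v))). Qed.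

Lemma edge_vtx_of_option (x y : option ('I_d * vtx t d)) :
  edge (vtx_of_option x) (vtx_of_option y) =
  match x, y with
  | None, Some (j, v) => vseq v == [::]
  | Some (i, u), Some (j, v) => (i == j) && edge u v
  | _, _ => false
  end.
Proof.
case: x => [[i u]|]; case: y => [[j v]|] /=; rewrite /edge ?vseq_cons.
- apply/existsP/andP => [[k /eqP]|[/eqP -> /existsP [k /eqP uvE]]].
    by rewrite rcons_cons => -[-> uvE]; split=> //; apply/existsP; exists k; rewrite uvE.
  by exists k; rewrite rcons_cons uvE.
- by apply/existsP => -[k /eqP]; rewrite rcons_cons.
- apply/existsP/eqP => [[k /eqP /= [_ <-]] //|vs0]; by exists j; rewrite /= vs0.
- by apply/existsP => -[k /eqP].
Qed.

Lemma revealed_cons m i v :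
  revealed m (vtx_cons i v) = if vseq v is [::] then (i < m)%N else revealed m v.
Proof. by rewrite /revealed vseq_cons; case: (vseq v). Qed.

End VertexCons.

Lemma vtx0_root d (v : vtx 0 d) : v = vtx_root 0 d.
Proof. by apply/eqP; rewrite -size_vseq_eq0 -leqn0 size_vseq. Qed.

Definition edge_weight (R : realType) t d (theta : R) (l : {ffun vtx t d -> bool}) : R :=
  \prod_(u : vtx t d) \prod_(v : vtx t d | edge u v) kern theta (l u) (l v).

Definition sublab t d (i : 'I_d) (l : {ffun vtx t.+1 d -> bool}) : {ffun vtx t d -> bool} :=
  [ffun v => l (vtx_cons i v)].

Definition glue_lab t d (b : bool) (L : {ffun 'I_d -> {ffun vtx t d -> bool}}) :
  {ffun vtx t.+1 d -> bool} :=
  [ffun v => if vtx_uncons v is Some (i, v') then L i v' else b].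

Lemma weight_root (R : realType) (theta : R) t d sigma (l : {ffun vtx t d -> bool}) :
  weight theta sigma l = (l (vtx_root t d) == sigma)%:R * edge_weight theta l.
Proof.
have rootE : (fun v : vtx t d => size (vseq v) == 0%N) =1 pred1 (vtx_root t d).
  by move=> v; rewrite /= size_vseq_eq0.
by rewrite /weight (eq_bigl _ _ rootE) big_pred1_eq.
Qed.

Section Labelings.
Variables (R : realType) (theta : R) (t d : nat).

Lemma edge_weight_cons (l : {ffun vtx t.+1 d -> bool}) :
  edge_weight theta l =
  \prod_(i < d) (kern theta (l (vtx_root t.+1 d)) (l (vtx_cons i (vtx_root t d)))
                 * edge_weight theta (sublab i l)).
Proof.
have bij := onW_bij _ (vtx_of_option_bij t d).
have seq_nil : (fun v : vtx t d => vseq v == [::]) =1 pred1 (vtx_root t d).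
  by move=> v; rewrite /= -size_vseq_eq0 size_eq0.
rewrite /edge_weight (reindex _ (bij _)) /=.
under eq_bigr => x _ do rewrite (reindex _ (bij _)) (eq_bigl _ _ (edge_vtx_of_option x)).
rewrite big_option /= big_option_cond /= mul1r big_split /=; congr (_ * _).
  rewrite (eq_big (fun p => xpredT p.1 && (vseq p.2 == [::]))
     (fun p => kern theta (l (vtx_root t.+1 d)) (l (vtx_cons p.1 p.2)))); [|by case|by case].
  rewrite -(pair_big xpredT (fun v => vseq v == [::])
     (fun i v => kern theta (l (vtx_root t.+1 d)) (l (vtx_cons i v)))) /=.
  by apply: eq_bigr => i _; rewrite (eq_bigl _ _ seq_nil) big_pred1_eq.
rewrite [RHS]pair_big /=; apply: eq_bigr => -[i u] _ /=; rewrite big_option_cond /= mul1r.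
rewrite (eq_big (fun p => (i == p.1) && edge u p.2)
   (fun p => kern theta (l (vtx_cons i u)) (l (vtx_cons p.1 p.2)))); [|by case|by case].
rewrite -(pair_big (fun j => i == j) (fun v => edge u v)
   (fun j v => kern theta (l (vtx_cons i u)) (l (vtx_cons j v)))) /=.
by rewrite (big_pred1 i) //; apply: eq_bigr => v _; rewrite !ffunE.
Qed.

Lemma glue_lab_root b L : glue_lab b L (vtx_root t.+1 d) = b.
Proof. by rewrite ffunE. Qed.

Lemma glue_lab_cons b L i (v : vtx t d) : glue_lab b L (vtx_cons i v) = L i v.
Proof. by rewrite ffunE vtx_uncons_cons. Qed.

Lemma sublab_glue b L i : sublab i (@glue_lab t d b L) = L i.
Proof. by apply/ffunP => v; rewrite ffunE glue_lab_cons. Qed.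

Lemma glue_lab_bij : bijective (fun p => @glue_lab t d p.1 p.2).
Proof.
exists (fun l : {ffun vtx t.+1 d -> bool} => (l (vtx_root t.+1 d), [ffun i => sublab i l])).
- case=> b L; rewrite /= glue_lab_root; congr (_, _).
  by apply/ffunP => i; rewrite ffunE sublab_glue.
- move=> l; apply/ffunP => v; rewrite ffunE /=.
  by rewrite -{2}(vtx_unconsK v); case: (vtx_uncons v) => [[i v']|] //=; rewrite !ffunE.
Qed.

Lemma sum_lab_glue (G : {ffun vtx t.+1 d -> bool} -> R) :
  \sum_l G l = \sum_(b : bool) \sum_(L : {ffun 'I_d -> {ffun vtx t d -> bool}}) G (glue_lab b L).
Proof.
rewrite (reindex _ (onW_bij _ glue_lab_bij)) /=.
by rewrite -(pair_big xpredT xpredT (fun b L => G (glue_lab b L))).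
Qed.

Lemma weight_glue_lab sigma b L :
  weight theta sigma (@glue_lab t d b L) =
  (b == sigma)%:R * \prod_(i < d) (kern theta b (L i (vtx_root t d)) * edge_weight theta (L i)).
Proof.
rewrite weight_root glue_lab_root edge_weight_cons; congr (_ * _); apply: eq_bigr => i _.
by rewrite glue_lab_root glue_lab_cons sublab_glue.
Qed.

End Labelings.

Lemma revealed_cons_rev t d m i (v : vtx t d) : revealed m v -> revealed m (vtx_cons i v).
Proof. by rewrite revealed_cons /revealed; case: (vseq v). Qed.

Definition obs_cons t d m (i : 'I_d) (r : revV t d m) : revV t.+1 d m :=
  Sub (vtx_cons i (val r)) (revealed_cons_rev i (valP r)).

Definition child_rev t d m (i : 'I_d) : option (revV t.+1 d m) :=
  insub (vtx_cons i (vtx_root t d)).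

Definition sub_obs t d m (i : 'I_d) (w : obs t.+1 d m) : obs t d m :=
  [ffun r => w (obs_cons i r)].

(* The label of the i-th child of the root (the junk value [true] when that
   child is unrevealed) together with the observations of its subtree. *)
Definition obs_split t d m (w : obs t.+1 d m) : {ffun 'I_d -> bool * obs t d m} :=
  [ffun i => (if child_rev t m i is Some r then w r else true, sub_obs i w)].

Definition obs_glue t d m (f : {ffun 'I_d -> bool * obs t d m}) : obs t.+1 d m :=
  [ffun r : revV t.+1 d m => if vtx_uncons (val r) is Some (i, v) then
      (if (insub v : option (revV t d m)) is Some r' then (f i).2 r' else (f i).1)
    else false].

Definition agrees t d m (l : {ffun vtx t d -> bool}) (w : obs t d m) : bool :=
  [forall r : revV t d m, l (val r) == w r].

Section Observations.
Variables t d m : nat.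
Implicit Types (w : obs t.+1 d m) (f : {ffun 'I_d -> bool * obs t d m}).

Lemma child_rev_Some i r : child_rev t m i = Some r -> val r = vtx_cons i (vtx_root t d).
Proof. by rewrite /child_rev; case: insubP => // r0 _ r0E [<-]. Qed.

Lemma child_revP (i : 'I_d) : (child_rev t m i != None) = (i < m)%N.
Proof.
rewrite /child_rev; case: insubP => [r0 rev0 _|not_rev] /=.
- by move: rev0; rewrite revealed_cons /= => ->.
- by move: not_rev; rewrite revealed_cons /= => /negbTE ->.
Qed.

Lemma child_rev_cons_root i (r : revV t.+1 d m) :
  val r = vtx_cons i (vtx_root t d) -> child_rev t m i = Some r.
Proof. by move=> rE; rewrite /child_rev -rE valK. Qed.

Lemma revV_uncons (r : revV t.+1 d m) :
  exists i v, val r = vtx_cons i v.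
Proof.
have := vtx_unconsK (val r); have := valP r.
case: (vtx_uncons (val r)) => [[i v]|] /= rev_r rE; first by exists i, v.
by move: rev_r; rewrite -rE.
Qed.

Lemma revV_cons_cases i v (r : revV t.+1 d m) : val r = vtx_cons i v ->
  (v = vtx_root t d /\ child_rev t m i = Some r) \/ revealed m v.
Proof.
move=> rE; case vE: (vseq v) => [|x s]; [left | right].
  have v0 : v = vtx_root t d by apply: vseq_inj; rewrite vE.
  by subst v; split; last exact: child_rev_cons_root.
by move: (valP r); rewrite rE revealed_cons vE.
Qed.

Lemma agrees_glue b L w :
  agrees (glue_lab b L) w =
  [forall i, (if child_rev t m i is Some r then L i (vtx_root t d) == w r else true)
              && agrees (L i) (sub_obs i w)].
Proof.
apply/forallP/forallP => [agr i|agr r].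
  apply/andP; split.
    case rE: (child_rev t m i) => [r|] //.
    by move: (agr r); rewrite (child_rev_Some rE) glue_lab_cons.
  by apply/forallP => r'; move: (agr (obs_cons i r')); rewrite glue_lab_cons ffunE.
have [i [v rE]] := revV_uncons r; rewrite rE glue_lab_cons.
have /andP [agr_root /forallP agr_sub] := agr i.
have [[-> r_child]|rev_v] := revV_cons_cases rE; first by rewrite r_child in agr_root.
move: (agr_sub (Sub v rev_v)); rewrite ffunE /=.
suff -> : obs_cons i (Sub v rev_v : revV t d m) = r by [].
by apply: val_inj; rewrite rE.
Qed.

Lemma obs_splitK : cancel (@obs_split t d m) (@obs_glue t d m).
Proof.
move=> w; apply/ffunP => r; rewrite ffunE.
have [i [v rE]] := revV_uncons r; rewrite rE vtx_uncons_cons.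
case: insubP => [r' _ r'E|not_rev]; rewrite ffunE /=.
  by rewrite ffunE; congr (w _); apply: val_inj; rewrite /= r'E rE.
have [[_ r_child]|rev_v] := revV_cons_cases rE; first by rewrite r_child.
by rewrite rev_v in not_rev.
Qed.

Lemma obs_glueK f : (forall i : 'I_d, (i < m)%N || (f i).1) -> obs_split (obs_glue f) = f.
Proof.
move=> fP; apply/ffunP => i; rewrite ffunE [RHS]surjective_pairing; congr (_, _).
  case rE: (child_rev t m i) => [r|].
    by rewrite ffunE (child_rev_Some rE) vtx_uncons_cons insubF.
  have := child_revP i; rewrite rE /= => /esym/negbT/negbTE i_unrev.
  by move: (fP i); rewrite i_unrev.
by apply/ffunP => r'; rewrite !ffunE vtx_uncons_cons valK.
Qed.

Lemma sum_obs_split (R : nmodType) (H : {ffun 'I_d -> bool * obs t d m} -> R) :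
  \sum_(w : obs t.+1 d m) H (obs_split w) =
  \sum_(f : {ffun 'I_d -> bool * obs t d m} | [forall i : 'I_d, (i < m)%N || (f i).1]) H f.
Proof.
rewrite [RHS](reindex_onto (@obs_split t d m) (@obs_glue t d m)) /=; last first.
  by move=> f /forallP; apply: obs_glueK.
apply: eq_bigl => w; rewrite obs_splitK eqxx andbT.
apply/esym/forallP => i; rewrite ffunE /=.
case rE: (child_rev t m i) => [r|]; last by rewrite orbT.
by rewrite -(child_revP i) rE.
Qed.

End Observations.

(** * Factorisation over the children of the root *)

(* The joint law, given the root label sigma, of what [obs_split] extracts
   from the subtree of the i-th child. *)
Definition child_law (R : realType) t d m (theta : R) (i : 'I_d) (sigma : bool)
    (x : bool * obs t d m) : R :=
  \sum_(c : bool) kern theta sigma c * (if (i < m)%N then (c == x.1)%:R else 1)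
                  * mu theta c x.2.

Section Laws.
Variables (R : realType) (theta : R).
Hypothesis theta_bound : -1 <= theta <= 1.

Lemma mu_agrees t d m sigma (w : obs t d m) :
  mu theta sigma w =
  \sum_l (agrees l w)%:R * ((l (vtx_root t d) == sigma)%:R * edge_weight theta l).
Proof.
rewrite /mu big_mkcond; apply: eq_bigr => l _; rewrite -weight_root /agrees.
by case: ifP; rewrite ?mul1r ?mul0r.
Qed.

Lemma mu_split t d m sigma (w : obs t.+1 d m) :
  mu theta sigma w = \prod_(i < d) child_law theta i sigma (obs_split w i).
Proof.
rewrite mu_agrees sum_lab_glue (bigD1 sigma) //= [X in _ + X]big1 ?addr0; last first.
  by move=> b /negbTE nb; apply: big1 => L _; rewrite glue_lab_root nb mul0r mulr0.
under [LHS]eq_bigr => L _.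
  rewrite agrees_glue natr_forall -weight_root weight_glue_lab eqxx mul1r -big_split /=.
  over.
rewrite -(bigA_distr_bigA (fun i (l : {ffun vtx t d -> bool}) =>
   ((if child_rev t m i is Some r then l (vtx_root t d) == w r else true)
      && agrees l (sub_obs i w))%:R *
   (kern theta sigma (l (vtx_root t d)) * edge_weight theta l))) /=.
apply: eq_bigr => i _; rewrite /child_law ffunE /=.
under [RHS]eq_bigr => c _ do rewrite mu_agrees mulr_sumr.
rewrite exchange_big /=; apply: eq_bigr => l _.
under eq_bigr => c _ do rewrite mulrCA mulrA mulrCA.
rewrite big_bool -(child_revP t m i); case: (child_rev t m i) => [r|] /=.
  by case: (l _); case: (w r) => /=; ring.
by case: (l _) => /=; ring.
Qed.

Lemma kern_ge0 a b : 0 <= kern theta a b.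
Proof. by case/andP: theta_bound => ? ?; rewrite /kern; case: ifP => _; lra. Qed.

Lemma sum_kern a : \sum_(c : bool) kern theta a c = 1.
Proof. by rewrite big_bool /kern; case: a => /=; lra. Qed.

Lemma edge_weight_ge0 t d (l : {ffun vtx t d -> bool}) : 0 <= edge_weight theta l.
Proof. by apply: prodr_ge0 => u _; apply: prodr_ge0 => v _; exact: kern_ge0. Qed.

Lemma mu_ge0 t d m sigma (w : obs t d m) : 0 <= mu theta sigma w.
Proof.
rewrite mu_agrees; apply: sumr_ge0 => l _.
by rewrite !mulr_ge0 ?ler0n ?edge_weight_ge0.
Qed.

Lemma child_law_ge0 t d m i sigma (x : bool * obs t d m) : 0 <= child_law theta i sigma x.
Proof.
apply: sumr_ge0 => c _; rewrite !mulr_ge0 ?kern_ge0 ?mu_ge0 //.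
by case: (i < m)%N; rewrite ?ler0n.
Qed.

Lemma revV0_empty d m (r : revV 0 d m) : False.
Proof. by have := valP r; rewrite (vtx0_root (val r)). Qed.

Lemma sum_obs0 d m (F : obs 0 d m -> R) : \sum_w F w = F [ffun r => false].
Proof.
have single : (fun w : obs 0 d m => true) =1 pred1 [ffun r => false].
  by move=> w /=; apply/esym/eqP/ffunP => r; case: (revV0_empty r).
by rewrite (eq_bigl _ _ single) big_pred1_eq.
Qed.

Lemma mu0 d m sigma (w : obs 0 d m) : mu theta sigma w = 1.
Proof.
rewrite mu_agrees.
have agr (l : {ffun vtx 0 d -> bool}) : agrees l w by apply/forallP => r; case: (revV0_empty r).
have edge0 (l : {ffun vtx 0 d -> bool}) : edge_weight theta l = 1.
  apply: big1 => u _; apply: big1 => v /existsP [i /eqP vE].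
  by move: (size_vseq v); rewrite -vE size_rcons.
under eq_bigr => l _ do rewrite agr edge0 mul1r mulr1.
have const_bij : bijective (fun b : bool => [ffun _ : vtx 0 d => b]).
  exists (fun l : {ffun vtx 0 d -> bool} => l (vtx_root 0 d)) => [b|l]; first by rewrite ffunE.
  by apply/ffunP => v; rewrite ffunE (vtx0_root v).
rewrite (reindex _ (onW_bij _ const_bij)) /=.
under eq_bigr => b _ do rewrite ffunE.
by rewrite big_bool; case: sigma; rewrite /= ?addr0 ?add0r.
Qed.

Lemma sum_child_law t d m (i : 'I_d) sigma :
  (forall c, \sum_(w : obs t d m) mu theta c w = 1) ->
  \sum_(x : bool * obs t d m | (i < m)%N || x.1) child_law theta i sigma x = 1.
Proof.
move=> sum_mu_t; rewrite (sum_pair_condl (fun b => (i < m)%N || b)) /child_law /=.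
have sum_c (g : bool -> R) : \sum_(w : obs t d m) \sum_(c : bool) g c * mu theta c w = \sum_c g c.
  by rewrite exchange_big; apply: eq_bigr => c _; rewrite -mulr_sumr sum_mu_t mulr1.
case: (i < m)%N => /=.
  rewrite !big_bool /= !sum_c !big_bool /= /kern.
  by case: sigma; rewrite /= ?mulr1 ?mulr0; lra.
rewrite big_mkcond big_bool /= addr0.
by under eq_bigr => w _ do under eq_bigr => c _ do rewrite mulr1; rewrite sum_c sum_kern.
Qed.

Lemma sum_mu t d m sigma : \sum_(w : obs t d m) mu theta sigma w = 1.
Proof.
elim: t sigma => [|t IH] sigma; first by rewrite sum_obs0 mu0.
under eq_bigr => w _ do rewrite mu_split.
rewrite (sum_obs_split (fun f => \prod_(i < d) child_law theta i sigma (f i))).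
rewrite (@sum_ffun_cond_prod R _ _ (fun (i : 'I_d) (x : bool * obs t d m) => (i < m)%N || x.1)
   (fun i x => child_law theta i sigma x)).
by apply: big1 => i _; apply: sum_child_law.
Qed.

End Laws.

(** * The Bhattacharyya coefficient *)

Definition bhatt (R : realType) t d m (theta : R) : R :=
  \sum_(w : obs t d m) Num.sqrt (mu theta true w * mu theta false w).

Definition child_bhatt (R : realType) t d m (theta : R) (i : 'I_d) : R :=
  \sum_(x : bool * obs t d m | (i < m)%N || x.1)
    Num.sqrt (child_law theta i true x * child_law theta i false x).

Section Bhattacharyya.
Variables (R : realType) (theta : R).
Hypothesis theta01 : 0 < theta < 1.

Let theta_bound : -1 <= theta <= 1 := unit_itv_bound theta01.

Lemma bhatt0 d m : bhatt 0 d m theta = 1.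
Proof. by rewrite /bhatt sum_obs0 !mu0 mulr1 sqrtr1. Qed.

Lemma bhatt_ge0 t d m : 0 <= bhatt t d m theta.
Proof. by apply: sumr_ge0 => w _; exact: sqrtr_ge0. Qed.

Lemma bhatt_le1 t d m : bhatt t d m theta <= 1.
Proof. by apply: sum_sqrtrM_le1 => [w|w||]; rewrite ?mu_ge0 ?sum_mu. Qed.

Lemma bhatt_split t d m : bhatt t.+1 d m theta = \prod_(i < d) child_bhatt t m theta i.
Proof.
rewrite /bhatt.
under eq_bigr => w _.
  rewrite !mu_split -big_split /= sqrtr_prod => [|i]; last by rewrite mulr_ge0 ?child_law_ge0.
  over.
rewrite (sum_obs_split (fun f => \prod_(i < d)
   Num.sqrt (child_law theta i true (f i) * child_law theta i false (f i)))).
exact: (@sum_ffun_cond_prod R _ _ (fun (i : 'I_d) (x : bool * obs t d m) => (i < m)%N || x.1)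
   (fun i x => Num.sqrt (child_law theta i true x * child_law theta i false x))).
Qed.

Lemma child_bhatt_le1 t d m (i : 'I_d) : 0 <= child_bhatt t m theta i <= 1.
Proof.
rewrite sumr_ge0 => [|x _]; last exact: sqrtr_ge0.
by apply: sum_sqrtrM_le1 => [x|x||]; rewrite ?child_law_ge0 ?sum_child_law // => c; rewrite sum_mu.
Qed.

Lemma child_law_rev t d m (i : 'I_d) sigma b (w : obs t d m) :
  (i < m)%N -> child_law theta i sigma (b, w) = kern theta sigma b * mu theta b w.
Proof.
move=> i_rev; rewrite /child_law i_rev big_bool.
by case: b; rewrite /= ?mulr1 ?mulr0 ?mul0r ?add0r ?addr0.
Qed.

Lemma child_law_unrev t d m (i : 'I_d) sigma b (w : obs t d m) :
  (m <= i)%N -> child_law theta i sigma (b, w) =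
    kern theta sigma true * mu theta true w + kern theta sigma false * mu theta false w.
Proof. by rewrite leqNgt => /negbTE i_unrev; rewrite /child_law i_unrev big_bool /= !mulr1. Qed.

Lemma child_bhatt_rev_ge t d m (i : 'I_d) :
  (i < m)%N -> 1 - theta ^+ 2 <= child_bhatt t m theta i.
Proof.
case/andP: theta01 => theta_gt0 theta_lt1 i_rev.
rewrite /child_bhatt i_rev (sum_pair_condl xpredT) /=.
have kern_sqrt b : (1 - theta ^+ 2) / 2 <= Num.sqrt (kern theta true b * kern theta false b).
  apply: ler_sqrtr_sqr; first by nra.
  have : 0 <= theta ^+ 2 * (1 - theta ^+ 2) by apply: mulr_ge0; nra.
  by rewrite /kern; case: b => /=; nra.
apply: (le_trans (y := \sum_(b : bool) \sum_(w : obs t d m) (1 - theta ^+ 2) / 2 * mu theta b w)).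
  by rewrite big_bool /= -!mulr_sumr !sum_mu; lra.
apply: ler_sum => b _; apply: ler_sum => w _.
rewrite !child_law_rev // mulrACA sqrtrM ?mulr_ge0 ?kern_ge0 //.
by rewrite -expr2 sqrtr_sqr ger0_norm ?mu_ge0 // ler_wpM2r ?mu_ge0.
Qed.

Lemma child_bhatt_unrev_ge t d m (i : 'I_d) :
  (m <= i)%N -> 1 - theta ^+ 2 * (1 - bhatt t d m theta) <= child_bhatt t m theta i.
Proof.
case/andP: theta01 => theta_gt0 theta_lt1 i_unrev.
rewrite /child_bhatt ltnNge i_unrev (sum_pair_condl id) /= big_mkcond big_bool /= addr0.
apply: (le_trans (y := \sum_(w : obs t d m)
   ((mu theta true w + mu theta false w) / 2 - theta ^+ 2 *
     ((mu theta true w + mu theta false w) / 2 -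
      Num.sqrt (mu theta true w * mu theta false w))))).
  by rewrite sumrB -mulr_sumr sumrB -!mulr_suml big_split /= !sum_mu /bhatt; lra.
apply: ler_sum => w _; rewrite !child_law_unrev // /kern /=.
by apply: bsc_sqrtrM_ge; rewrite ?mu_ge0 //; apply/andP; split; lra.
Qed.

Lemma one_sub_bhatt_le t d m : (m <= d)%N -> (d - m)%:R * theta ^+ 2 < 1 ->
  1 - bhatt t d m theta <= m%:R * theta ^+ 2 / (1 - (d - m)%:R * theta ^+ 2).
Proof.
move=> le_md; set a := (d - m)%:R * theta ^+ 2 => a_lt1.
have a_ge0 : 0 <= a by rewrite mulr_ge0 ?ler0n ?sqr_ge0.
have mtheta_ge0 : 0 <= m%:R * theta ^+ 2 by rewrite mulr_ge0 ?ler0n ?sqr_ge0.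
set K := m%:R * theta ^+ 2 / (1 - a).
have K_fix : K = m%:R * theta ^+ 2 + a * K by rewrite /K; field; lra.
elim: t => [|t IH]; first by rewrite bhatt0 subrr divr_ge0 //; lra.
pose e (i : 'I_d) := if (i < m)%N then theta ^+ 2 else theta ^+ 2 * (1 - bhatt t d m theta).
have e_ge0 i : 0 <= e i.
  rewrite /e; case: ifP => _; first exact: sqr_ge0.
  by rewrite mulr_ge0 ?sqr_ge0 // subr_ge0 bhatt_le1.
have child_ge i : 1 - e i <= child_bhatt t m theta i.
  rewrite /e; have [i_rev|i_unrev] := ltnP i m; first exact: child_bhatt_rev_ge.
  exact: child_bhatt_unrev_ge.
have := subr_sum_le_prod (@child_bhatt_le1 t d m) child_ge e_ge0.
rewrite -bhatt_split sum_ord_ltn_if //.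
have : (d - m)%:R * (theta ^+ 2 * (1 - bhatt t d m theta)) <= a * K.
  by rewrite /a -mulrA; apply: ler_wpM2l; rewrite ?ler0n // ler_wpM2l ?sqr_ge0.
lra.
Qed.

End Bhattacharyya.

(** * Total variation and testing *)

Section TotalVariation.
Variables (R : realType) (theta : R) (t d m : nat).
Hypothesis theta01 : 0 < theta < 1.

Let theta_bound : -1 <= theta <= 1 := unit_itv_bound theta01.

Lemma dTV_ge0 : 0 <= dTV t d m theta.
Proof. by rewrite mulr_ge0 ?invr_ge0 ?ler0n // sumr_ge0 // => w _; exact: normr_ge0. Qed.

(* [|p - q| = |sqrt p - sqrt q| (sqrt p + sqrt q)] and Cauchy-Schwarz give
   [dTV ^ 2 <= 1 - bhatt ^ 2]. *)
Lemma dTV_sqr_le_bhatt : dTV t d m theta ^+ 2 <= 2 * (1 - bhatt t d m theta).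
Proof.
set p := @mu R t d m theta true; set q := @mu R t d m theta false.
have p_ge0 w : 0 <= p w by exact: mu_ge0.
have q_ge0 w : 0 <= q w by exact: mu_ge0.
have normE w : `|p w - q w| =
    `|Num.sqrt (p w) - Num.sqrt (q w)| * (Num.sqrt (p w) + Num.sqrt (q w)).
  rewrite -[X in _ = _ * X]ger0_norm ?addr_ge0 ?sqrtr_ge0 // -normrM.
  by rewrite -{1}(sqr_sqrtr (p_ge0 w)) -{1}(sqr_sqrtr (q_ge0 w)); congr `|_|; ring.
have := cauchy_schwarz_sum (fun w => `|Num.sqrt (p w) - Num.sqrt (q w)|)
                           (fun w => Num.sqrt (p w) + Num.sqrt (q w)).
have -> : \sum_w `|Num.sqrt (p w) - Num.sqrt (q w)| ^+ 2 = 2 - 2 * bhatt t d m theta.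
  rewrite (eq_bigr (fun w => p w + q w - 2 * Num.sqrt (p w * q w))) => [|w _]; last first.
    by rewrite real_normK ?num_real // sqrtrM // sqrrB !sqr_sqrtr //; ring.
  by rewrite sumrB big_split /= !sum_mu -mulr_sumr.
have -> : \sum_w (Num.sqrt (p w) + Num.sqrt (q w)) ^+ 2 = 2 + 2 * bhatt t d m theta.
  rewrite (eq_bigr (fun w => p w + q w + 2 * Num.sqrt (p w * q w))) => [|w _]; last first.
    by rewrite sqrtrM // sqrrD !sqr_sqrtr //; ring.
  by rewrite !big_split /= !sum_mu -mulr_sumr.
rewrite /dTV (eq_bigr _ (fun w _ => normE w)) exprMn.
have := bhatt_ge0 theta t d m; have := bhatt_le1 theta01 t d m.
have -> : (2^-1 : R) ^+ 2 = 1 / 4 by field.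
nra.
Qed.

Lemma err_add_ge (Phi : obs t d m -> bool) :
  1 - dTV t d m theta <= err theta Phi true + err theta Phi false.
Proof.
rewrite /err [X in _ <= X + _]big_mkcond [X in _ <= _ + X]big_mkcond -big_split /dTV /=.
apply: (le_trans (y := \sum_w ((mu theta true w + mu theta false w) / 2
                               - `|mu theta true w - mu theta false w| / 2))).
  by rewrite sumrB -!mulr_suml big_split /= !sum_mu; lra.
apply: ler_sum => w _.
have norm_tf := ler_norm (mu theta true w - mu theta false w).
have norm_ft := ler_norm (mu theta false w - mu theta true w); rewrite distrC in norm_ft.
by case: (Phi w) => /=; lra.
Qed.

End TotalVariation.

Lemma le_ln1D4div (R : realType) (x : R) : 0 < x < 1 -> x <= ln (1 + 4 * x / (1 - x)).
Proof.
case/andP=> x_gt0 x_lt1; have ex_gt0 := expR_gt0 x.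
have expR_le : sequences.expR x <= 1 + 4 * x / (1 - x).
  have : sequences.expR x * (1 - x) <= 1.
    have := expR_ge1Dx (- x); rewrite expRN => /(ler_wpM2l (ltW ex_gt0)).
    by rewrite mulfV ?gt_eqF.
  have -> : 1 + 4 * x / (1 - x) = (1 + 3 * x) / (1 - x) by field; lra.
  by rewrite ler_pdivlMr; [nra | lra].
rewrite -[X in X <= _]expRK ler_ln // posrE //.
exact: lt_le_trans ex_gt0 expR_le.
Qed.

Lemma dTV_sqr_le (R : realType) (theta delta : R) (d m t : nat) :
  0 < theta < 1 -> (m <= d)%N -> delta = m%:R / d%:R ->
  1 < delta * d%:R -> (1 - delta) * theta ^+ 2 * d%:R < 1 ->
  dTV t d m theta ^+ 2 <=
    2 * delta * d%:R * ln (1 + 4 * theta ^+ 2 / (1 - theta ^+ 2))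
    / (1 - (1 - delta) * theta ^+ 2 * d%:R).
Proof.
move=> theta01 le_md -> delta_gt1.
have d_neq0 : d%:R != 0 :> R by apply: contraTneq delta_gt1 => ->; rewrite mulr0 ltr10.
have unrevE : (1 - m%:R / d%:R) * theta ^+ 2 * d%:R = (d - m)%:R * theta ^+ 2.
  by rewrite natrB //; field.
rewrite unrevE -(mulrA 2) divfK // => unrev_lt1.
have := le_ln1D4div (sqr_unit_itv theta01); set L := ln _ => theta2_le.
have := dTV_sqr_le_bhatt t d m theta01; have := one_sub_bhatt_le theta01 t le_md unrev_lt1.
have : m%:R * theta ^+ 2 / (1 - (d - m)%:R * theta ^+ 2) <=
       m%:R * L / (1 - (d - m)%:R * theta ^+ 2).
  by rewrite ler_wpM2r ?invr_ge0 ?ler_wpM2l ?ler0n //; lra.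
lra.
Qed.

Unset Implicit Arguments.

Theorem theorem3 (R : realType) :
  (forall (theta delta : R) (d m t : nat),
      0 < theta < 1 -> (m <= d)%N -> delta = m%:R / d%:R -> (0 < t)%N ->
      1 < delta * d%:R ->
      (1 - delta) * theta ^+ 2 * d%:R < 1 ->
      2 * delta * d%:R * ln (1 + 4 * theta ^+ 2 / (1 - theta ^+ 2))
        < (1 - (1 - delta) * theta ^+ 2 * d%:R) ^+ 2 ->
      dTV t d m theta ^+ 2 <=
        2 * delta * d%:R * ln (1 + 4 * theta ^+ 2 / (1 - theta ^+ 2))
        / (1 - (1 - delta) * theta ^+ 2 * d%:R)) /\
  (exists C : R, 0 < C /\
    forall (theta delta : R) (d m t : nat),
      0 < theta < 1 -> (m <= d)%N -> delta = m%:R / d%:R -> (0 < t)%N ->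
      1 < delta * d%:R ->
      (1 - delta) * theta ^+ 2 * d%:R < 1 ->
      2 * delta * d%:R * ln (1 + 4 * theta ^+ 2 / (1 - theta ^+ 2))
        < (1 - (1 - delta) * theta ^+ 2 * d%:R) ^+ 2 ->
      forall Phi : obs t d m -> bool,
        1 / 2 - C * Num.sqrt (delta * d%:R
            * ln (1 + 4 * theta ^+ 2 / (1 - theta ^+ 2))
            / (1 - (1 - delta) * theta ^+ 2 * d%:R))
        <= Num.max (err theta Phi true) (err theta Phi false)).
Proof.
split=> [theta delta d m t theta01 le_md deltaE _ delta_gt1 unrev_lt1 _|].
  exact: dTV_sqr_le.
exists 1; split=> [|theta delta d m t theta01 le_md deltaE _ delta_gt1 unrev_lt1 _ Phi].
  exact: ltr01.
rewrite [1 * Num.sqrt _]mul1r; apply: (two_point_lower_bound _ _ _ (err_add_ge theta Phi)).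
- exact: dTV_ge0.
- have L_ge0 := le_trans (sqr_ge0 theta) (le_ln1D4div (sqr_unit_itv theta01)).
  have delta_d_ge0 : 0 <= delta * d%:R by apply: ltW (lt_trans ltr01 delta_gt1).
  by rewrite divr_ge0 ?(mulr_ge0 delta_d_ge0 L_ge0) // subr_ge0 ltW.
- apply: le_trans (dTV_sqr_le t theta01 le_md deltaE delta_gt1 unrev_lt1) _.
  by rewrite !mulrA.
Qed.
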